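(* Let $F\colon\mathbb{A}\to\mathbb{B}$ be a double functor. Then $F$ is a double trivial fibration if and only if both $\mathbf{H}F\colon\mathbf{H}\mathbb{A}\to\mathbf{H}\mathbb{B}$ and $\mathcal{V}F\colon\mathcal{V}\mathbb{A}\to\mathcal{V}\mathbb{B}$ are trivial fibrations in the Lack model structure on $2\mathrm{Cat}$ (i.e.\ 2-functors that are both biequivalences and Lack fibrations).
   Context: A double category has objects, horizontal morphisms, vertical morphisms and squares; a square $\alpha\colon(u\,{}^{a}_{b}\,v)$ has top horizontal boundary $a\colon A\to B$, bottom $b\colon A'\to B'$, left vertical boundary $u\colon A\to A'$ and right $v\colon B\to B'$; $e_A$ is the vertical identity on $A$. $\mathbf{H}\mathbb{A}$ is the underlying horizontal 2-category (objects, horizontal morphisms, and as 2-cells $a\Rightarrow b$ the squares $(e_A\,{}^{a}_{b}\,e_B)$). $\mathcal{V}\mathbb{A}$ is the 2-category whose objects are vertical morphisms of $\mathbb{A}$, morphisms $u\to v$ are squares with left boundary $u$ and right boundary $v$, and 2-cells from $\alpha\colon(u\,{}^{a}_{b}\,v)$ to $\beta\colon(u\,{}^{c}_{d}\,v)$ are pairs of squares $\sigma_0\colon(e_A\,{}^{a}_{c}\,e_B)$, $\sigma_1\colon(e_{A'}\,{}^{b}_{d}\,e_{B'})$ with $\sigma_0$ on top of $\beta$ equal to $\alpha$ on top of $\sigma_1$. A 2-functor $G\colon\mathcal{A}\to\mathcal{B}$ is a biequivalence if it is essentially surjective up to equivalence on objects, essentially full up to invertible 2-cell on morphisms, and fully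 faithful on 2-cells; it is a Lack fibration if equivalences $b\colon B\to GC$ lift to equivalences $a\colon A\to C$ with $Ga=b$, and invertible 2-cells $\beta\colon b\cong Gc$ lift to invertible 2-cells $\alpha\colon a\cong c$ with $G\alpha=\beta$. A double functor $F\colon\mathbb{A}\to\mathbb{B}$ is a double trivial fibration if (dt1) it is surjective on objects; (dt2) for every horizontal morphism $b\colon FA\to FC$ there is a horizontal morphism $a\colon A\to C$ with $Fa=b$; (dt3) every vertical morphism of $\mathbb{B}$ is of the form $Fu$ for some vertical morphism $u$ of $\mathbb{A}$; (dt4) for every square $\beta\colon(Fu\,{}^{Fa}_{Fc}\,Fu')$ in $\mathbb{B}$ there is a unique square $\alpha\colon(u\,{}^{a}_{c}\,u')$ in $\mathbb{A}$ with $F\alpha=\beta$. *)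

(* Strict double categories and strict 2-categories, in the "flat"
   (internal-category) presentation: each kind of cell is a type equipped with
   boundary functions; compositions are total functions whose laws are only
   imposed on composable inputs. *)

Set Implicit Arguments.

(* Conventions: [hcomp a b] is "a then b" (a : A -> B, b : B -> C);   *)
(* [vcomp u v] is "u then v"; [sq_hcomp al be] puts al to the left   *)
(* of be (needs right al = left be); [sq_vcomp al be] puts al on top  *)
(* of be (needs bot al = top be).  [vid A] is e_A, [sq_hid u] is the  *)
(* horizontal identity square (u id id u), [sq_vid a] the vertical    *)
(* identity square (e a a e).                                         *)

Record DoubleCat := {
  ob : Type; hor : Type; ver : Type; sq : Type;
  hdom : hor -> ob; hcod : hor -> ob;
  vdom : ver -> ob; vcod : ver -> ob;
  sq_top : sq -> hor; sq_bot : sq -> hor;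
  sq_left : sq -> ver; sq_right : sq -> ver;
  hid : ob -> hor; vid : ob -> ver;
  hcomp : hor -> hor -> hor; vcomp : ver -> ver -> ver;
  sq_hid : ver -> sq; sq_vid : hor -> sq;
  sq_hcomp : sq -> sq -> sq; sq_vcomp : sq -> sq -> sq;
  hdom_hid : forall A, hdom (hid A) = A;
  hcod_hid : forall A, hcod (hid A) = A;
  vdom_vid : forall A, vdom (vid A) = A;
  vcod_vid : forall A, vcod (vid A) = A;
  hdom_hcomp : forall a b, hcod a = hdom b -> hdom (hcomp a b) = hdom a;
  hcod_hcomp : forall a b, hcod a = hdom b -> hcod (hcomp a b) = hcod b;
  vdom_vcomp : forall u v, vcod u = vdom v -> vdom (vcomp u v) = vdom u;
  vcod_vcomp : forall u v, vcod u = vdom v -> vcod (vcomp u v) = vcod v;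
  sq_frame_tl : forall s, hdom (sq_top s) = vdom (sq_left s);
  sq_frame_tr : forall s, hcod (sq_top s) = vdom (sq_right s);
  sq_frame_bl : forall s, hdom (sq_bot s) = vcod (sq_left s);
  sq_frame_br : forall s, hcod (sq_bot s) = vcod (sq_right s);
  sq_hid_left : forall u, sq_left (sq_hid u) = u;
  sq_hid_right : forall u, sq_right (sq_hid u) = u;
  sq_hid_top : forall u, sq_top (sq_hid u) = hid (vdom u);
  sq_hid_bot : forall u, sq_bot (sq_hid u) = hid (vcod u);
  sq_vid_top : forall a, sq_top (sq_vid a) = a;
  sq_vid_bot : forall a, sq_bot (sq_vid a) = a;
  sq_vid_left : forall a, sq_left (sq_vid a) = vid (hdom a);
  sq_vid_right : forall a, sq_right (sq_vid a) = vid (hcod a);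
  sq_hcomp_top : forall s t, sq_right s = sq_left t ->
    sq_top (sq_hcomp s t) = hcomp (sq_top s) (sq_top t);
  sq_hcomp_bot : forall s t, sq_right s = sq_left t ->
    sq_bot (sq_hcomp s t) = hcomp (sq_bot s) (sq_bot t);
  sq_hcomp_left : forall s t, sq_right s = sq_left t ->
    sq_left (sq_hcomp s t) = sq_left s;
  sq_hcomp_right : forall s t, sq_right s = sq_left t ->
    sq_right (sq_hcomp s t) = sq_right t;
  sq_vcomp_left : forall s t, sq_bot s = sq_top t ->
    sq_left (sq_vcomp s t) = vcomp (sq_left s) (sq_left t);
  sq_vcomp_right : forall s t, sq_bot s = sq_top t ->
    sq_right (sq_vcomp s t) = vcomp (sq_right s) (sq_right t);
  sq_vcomp_top : forall s t, sq_bot s = sq_top t ->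
    sq_top (sq_vcomp s t) = sq_top s;
  sq_vcomp_bot : forall s t, sq_bot s = sq_top t ->
    sq_bot (sq_vcomp s t) = sq_bot t;
  hcomp_id_l : forall a, hcomp (hid (hdom a)) a = a;
  hcomp_id_r : forall a, hcomp a (hid (hcod a)) = a;
  hcomp_assoc : forall a b c, hcod a = hdom b -> hcod b = hdom c ->
    hcomp a (hcomp b c) = hcomp (hcomp a b) c;
  vcomp_id_l : forall u, vcomp (vid (vdom u)) u = u;
  vcomp_id_r : forall u, vcomp u (vid (vcod u)) = u;
  vcomp_assoc : forall u v w, vcod u = vdom v -> vcod v = vdom w ->
    vcomp u (vcomp v w) = vcomp (vcomp u v) w;
  sq_hcomp_id_l : forall s, sq_hcomp (sq_hid (sq_left s)) s = s;
  sq_hcomp_id_r : forall s, sq_hcomp s (sq_hid (sq_right s)) = s;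
  sq_hcomp_assoc : forall s t r, sq_right s = sq_left t -> sq_right t = sq_left r ->
    sq_hcomp s (sq_hcomp t r) = sq_hcomp (sq_hcomp s t) r;
  sq_vcomp_id_l : forall s, sq_vcomp (sq_vid (sq_top s)) s = s;
  sq_vcomp_id_r : forall s, sq_vcomp s (sq_vid (sq_bot s)) = s;
  sq_vcomp_assoc : forall s t r, sq_bot s = sq_top t -> sq_bot t = sq_top r ->
    sq_vcomp s (sq_vcomp t r) = sq_vcomp (sq_vcomp s t) r;
  sq_hid_vcomp : forall u v, vcod u = vdom v ->
    sq_hid (vcomp u v) = sq_vcomp (sq_hid u) (sq_hid v);
  sq_vid_hcomp : forall a b, hcod a = hdom b ->
    sq_vid (hcomp a b) = sq_hcomp (sq_vid a) (sq_vid b);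
  sq_hid_vid : forall A, sq_hid (vid A) = sq_vid (hid A);
  interchange : forall s t p q,
    sq_right s = sq_left t -> sq_right p = sq_left q ->
    sq_bot s = sq_top p -> sq_bot t = sq_top q ->
    sq_vcomp (sq_hcomp s t) (sq_hcomp p q) = sq_hcomp (sq_vcomp s p) (sq_vcomp t q)
}.

Arguments hdom {d}. Arguments hcod {d}. Arguments vdom {d}. Arguments vcod {d}.
Arguments sq_top {d}. Arguments sq_bot {d}. Arguments sq_left {d}. Arguments sq_right {d}.
Arguments hid {d}. Arguments vid {d}. Arguments hcomp {d}. Arguments vcomp {d}.
Arguments sq_hid {d}. Arguments sq_vid {d}. Arguments sq_hcomp {d}. Arguments sq_vcomp {d}.

Record DoubleFunctor (A B : DoubleCat) := {
  Fo : ob A -> ob B; Fh : hor A -> hor B; Fv : ver A -> ver B; Fs : sq A -> sq B;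
  Fh_hdom : forall a, hdom (Fh a) = Fo (hdom a);
  Fh_hcod : forall a, hcod (Fh a) = Fo (hcod a);
  Fv_vdom : forall u, vdom (Fv u) = Fo (vdom u);
  Fv_vcod : forall u, vcod (Fv u) = Fo (vcod u);
  Fs_top : forall s, sq_top (Fs s) = Fh (sq_top s);
  Fs_bot : forall s, sq_bot (Fs s) = Fh (sq_bot s);
  Fs_left : forall s, sq_left (Fs s) = Fv (sq_left s);
  Fs_right : forall s, sq_right (Fs s) = Fv (sq_right s);
  Fh_hid : forall X, Fh (hid X) = hid (Fo X);
  Fv_vid : forall X, Fv (vid X) = vid (Fo X);
  Fh_hcomp : forall a b, hcod a = hdom b -> Fh (hcomp a b) = hcomp (Fh a) (Fh b);
  Fv_vcomp : forall u v, vcod u = vdom v -> Fv (vcomp u v) = vcomp (Fv u) (Fv v);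
  Fs_sq_hid : forall u, Fs (sq_hid u) = sq_hid (Fv u);
  Fs_sq_vid : forall a, Fs (sq_vid a) = sq_vid (Fh a);
  Fs_sq_hcomp : forall s t, sq_right s = sq_left t ->
    Fs (sq_hcomp s t) = sq_hcomp (Fs s) (Fs t);
  Fs_sq_vcomp : forall s t, sq_bot s = sq_top t ->
    Fs (sq_vcomp s t) = sq_vcomp (Fs s) (Fs t)
}.

Arguments Fo {A B}. Arguments Fh {A B}. Arguments Fv {A B}. Arguments Fs {A B}.

Definition double_trivial_fibration (A B : DoubleCat) (F : DoubleFunctor A B) : Prop :=
  (* dt1 *)
  (forall Y : ob B, exists X : ob A, Fo F X = Y) /\
  (* dt2 *)
  (forall (X Z : ob A) (b : hor B), hdom b = Fo F X -> hcod b = Fo F Z ->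
     exists a : hor A, hdom a = X /\ hcod a = Z /\ Fh F a = b) /\
  (* dt3 *)
  (forall v : ver B, exists u : ver A, Fv F u = v) /\
  (* dt4: for a frame (u a c u') in A and a square (Fu Fa Fc Fu') in B,
     there is a unique square (u a c u') in A over it *)
  (forall (u u' : ver A) (a c : hor A) (be : sq B),
     hdom a = vdom u -> hcod a = vdom u' -> hdom c = vcod u -> hcod c = vcod u' ->
     sq_left be = Fv F u -> sq_right be = Fv F u' ->
     sq_top be = Fh F a -> sq_bot be = Fh F c ->
     exists al : sq A,
       (sq_left al = u /\ sq_right al = u' /\ sq_top al = a /\ sq_bot al = c /\
        Fs F al = be) /\
       forall al' : sq A,
         sq_left al' = u -> sq_right al' = u' -> sq_top al' = a -> sq_bot al' = c ->
         Fs F al' = be -> al' = al).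

(* (Strict) 2-categories, given by the operations needed for the      *)
(* notions of equivalence, invertible 2-cell, biequivalence and Lack  *)
(* fibration.  The type [cell] may contain junk; the actual 2-cells   *)
(* are those satisfying [cvalid].  [comp f g] is "f then g";          *)
(* [vcompc c d] is the vertical composite "c then d".                 *)

Record TwoCatData := {
  tob : Type; tmor : Type; tcell : Type;
  mdom : tmor -> tob; mcod : tmor -> tob;
  cdom : tcell -> tmor; ccod : tcell -> tmor;
  cvalid : tcell -> Prop;
  idm : tob -> tmor;
  comp : tmor -> tmor -> tmor;
  idc : tmor -> tcell;
  vcompc : tcell -> tcell -> tcell
}.

Arguments mdom {t}. Arguments mcod {t}. Arguments cdom {t}. Arguments ccod {t}.
Arguments cvalid {t}. Arguments idm {t}. Arguments comp {t}. Arguments idc {t}.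
Arguments vcompc {t}.

Record TwoFunctorData (C D : TwoCatData) := {
  F0 : tob C -> tob D; F1 : tmor C -> tmor D; F2 : tcell C -> tcell D
}.
Arguments F0 {C D}. Arguments F1 {C D}. Arguments F2 {C D}.

Section TwoCatNotions.
Variable C : TwoCatData.

Definition mor_between (f : tmor C) (X Y : tob C) : Prop := mdom f = X /\ mcod f = Y.

Definition cell_between (c : tcell C) (f g : tmor C) : Prop :=
  cvalid c /\ cdom c = f /\ ccod c = g.

Definition invertible_cell (c : tcell C) (f g : tmor C) : Prop :=
  cell_between c f g /\
  exists d, cell_between d g f /\ vcompc c d = idc f /\ vcompc d c = idc g.

Definition equivalence (f : tmor C) (X Y : tob C) : Prop :=
  mor_between f X Y /\
  exists g, mor_between g Y X /\
    (exists c, invertible_cell c (idm X) (comp f g)) /\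
    (exists c, invertible_cell c (comp g f) (idm Y)).
End TwoCatNotions.
Arguments mor_between {C}. Arguments cell_between {C}.
Arguments invertible_cell {C}. Arguments equivalence {C}.

Section TwoFunctorNotions.
Variables (C D : TwoCatData) (G : TwoFunctorData C D).

Definition biequivalence : Prop :=
  (forall Y : tob D, exists X : tob C, exists e : tmor D, equivalence e (F0 G X) Y) /\
  (forall (X X' : tob C) (f : tmor D), mor_between f (F0 G X) (F0 G X') ->
     exists a : tmor C, mor_between a X X' /\
       exists c : tcell D, invertible_cell c (F1 G a) f) /\
  (forall (X X' : tob C) (a a' : tmor C),
     mor_between a X X' -> mor_between a' X X' ->
     forall be : tcell D, cell_between be (F1 G a) (F1 G a') ->
       exists al : tcell C, (cell_between al a a' /\ F2 G al = be) /\
         forall al' : tcell C, cell_between al' a a' -> F2 G al' = be -> al' = al).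

Definition lack_fibration : Prop :=
  (forall (Y : tob D) (Z : tob C) (b : tmor D), equivalence b Y (F0 G Z) ->
     exists (X : tob C) (a : tmor C), equivalence a X Z /\ F1 G a = b) /\
  (forall (b : tmor D) (c : tmor C) (be : tcell D), invertible_cell be b (F1 G c) ->
     exists (a : tmor C) (al : tcell C), invertible_cell al a c /\ F2 G al = be).

Definition lack_trivial_fibration : Prop := biequivalence /\ lack_fibration.
End TwoFunctorNotions.
Arguments biequivalence {C D}. Arguments lack_fibration {C D}.
Arguments lack_trivial_fibration {C D}.

(* The horizontal 2-category H A: objects, horizontal morphisms, and  *)
(* as 2-cells a => b the squares (e_X a b e_Y).                        *)

Definition Hcat (A : DoubleCat) : TwoCatData := {|
  tob := ob A; tmor := hor A; tcell := sq A;
  mdom := hdom; mcod := hcod;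
  cdom := sq_top; ccod := sq_bot;
  cvalid := fun s => sq_left s = vid (hdom (sq_top s)) /\
                     sq_right s = vid (hcod (sq_top s));
  idm := hid; comp := hcomp;
  idc := sq_vid; vcompc := sq_vcomp |}.

Definition HF (A B : DoubleCat) (F : DoubleFunctor A B)
  : TwoFunctorData (Hcat A) (Hcat B) :=
  @Build_TwoFunctorData (Hcat A) (Hcat B) (Fo F) (Fh F) (Fs F).

(* The 2-category V A: objects are vertical morphisms, morphisms u->v  *)
(* are squares with left u and right v (composed horizontally), and a *)
(* 2-cell from al : (u a b v) to be : (u c d v) is a pair of squares   *)
(* s0 : (e a c e), s1 : (e b d e) with s0 on top of be = al on top of  *)
(* s1.                                                                 *)

Record VCell (A : DoubleCat) := mkVCell {
  vc_src : sq A; vc_tgt : sq A; vc_s0 : sq A; vc_s1 : sq A }.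
Arguments mkVCell {A}. Arguments vc_src {A}. Arguments vc_tgt {A}.
Arguments vc_s0 {A}. Arguments vc_s1 {A}.

Definition vcell_valid (A : DoubleCat) (x : VCell A) : Prop :=
  let al := vc_src x in let be := vc_tgt x in
  let s0 := vc_s0 x in let s1 := vc_s1 x in
  sq_left al = sq_left be /\ sq_right al = sq_right be /\
  sq_top s0 = sq_top al /\ sq_bot s0 = sq_top be /\
  sq_left s0 = vid (hdom (sq_top al)) /\ sq_right s0 = vid (hcod (sq_top al)) /\
  sq_top s1 = sq_bot al /\ sq_bot s1 = sq_bot be /\
  sq_left s1 = vid (hdom (sq_bot al)) /\ sq_right s1 = vid (hcod (sq_bot al)) /\
  sq_vcomp s0 be = sq_vcomp al s1.

Definition Vcat (A : DoubleCat) : TwoCatData := {|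
  tob := ver A; tmor := sq A; tcell := VCell A;
  mdom := sq_left; mcod := sq_right;
  cdom := @vc_src A; ccod := @vc_tgt A;
  cvalid := @vcell_valid A;
  idm := sq_hid; comp := sq_hcomp;
  idc := fun al => mkVCell al al (sq_vid (sq_top al)) (sq_vid (sq_bot al));
  vcompc := fun x y => mkVCell (vc_src x) (vc_tgt y)
                         (sq_vcomp (vc_s0 x) (vc_s0 y)) (sq_vcomp (vc_s1 x) (vc_s1 y)) |}.

Definition VF (A B : DoubleCat) (F : DoubleFunctor A B)
  : TwoFunctorData (Vcat A) (Vcat B) :=
  @Build_TwoFunctorData (Vcat A) (Vcat B) (Fv F) (Fs F)
     (fun x : VCell A => mkVCell (Fs F (vc_src x)) (Fs F (vc_tgt x))
                                 (Fs F (vc_s0 x)) (Fs F (vc_s1 x))).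


(* The proof goes through the classical description of Lack trivial
   fibrations: a 2-functor is a biequivalence and a Lack fibration iff it is
   surjective on objects, full on morphisms and fully faithful on 2-cells
   (lemma [lack_trivial_fibration_iff]); equivalences and invertible 2-cells
   lift because fully faithful functors reflect invertibility.

   The translation is governed by framed squares: (dt4) says that
   F is bijective on squares of a fixed frame.  Conversely a square over a
   given frame is obtained by lifting it in V F with some top and bottom
   boundary, and then correcting these boundaries by pasting globular squares
   obtained from H F; uniqueness comes from fullness-and-faithfulness of V F
   on 2-cells combined with that of H F. *)

Set Implicit Arguments.

(* The squares in the composition laws are determined by the composability
   hypothesis, so they are made implicit. *)
Arguments sq_vcomp_left {d s t} _. Arguments sq_vcomp_right {d s t} _.
Arguments sq_vcomp_top {d s t} _. Arguments sq_vcomp_bot {d s t} _.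
Arguments sq_vcomp_assoc {d s t r} _ _.
Arguments sq_hcomp_left {d s t} _. Arguments sq_hcomp_right {d s t} _.
Arguments Fs_sq_vcomp [A B] d {s t} _.

Record two_cat_laws (T : TwoCatData) : Prop := {
  cell_vcomp_between : forall (x y : tcell T) f g h,
    cell_between x f g -> cell_between y g h -> cell_between (vcompc x y) f h;
  idc_between : forall f : tmor T, cell_between (idc f) f f;
  idc_vcompc_idc : forall f : tmor T, vcompc (idc f) (idc f) = idc f;
  cell_parallel : forall (c : tcell T) f g,
    cell_between c f g -> mdom f = mdom g /\ mcod f = mcod g;
  comp_between : forall (f g : tmor T) X Y Z,
    mor_between f X Y -> mor_between g Y Z -> mor_between (comp f g) X Z;
  idm_between : forall X : tob T, mor_between (idm X) X X;
  idm_comp_idm : forall X : tob T, comp (idm X) (idm X) = idm X }.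

Record two_functor_laws (C D : TwoCatData) (G : TwoFunctorData C D) : Prop := {
  F1_mdom : forall f, mdom (F1 G f) = F0 G (mdom f);
  F1_mcod : forall f, mcod (F1 G f) = F0 G (mcod f);
  F1_comp : forall f g, mcod f = mdom g -> F1 G (comp f g) = comp (F1 G f) (F1 G g);
  F1_idm : forall X, F1 G (idm X) = idm (F0 G X);
  F2_vcompc : forall (x y : tcell C) f g h, cell_between x f g -> cell_between y g h ->
    F2 G (vcompc x y) = vcompc (F2 G x) (F2 G y);
  F2_idc : forall f, F2 G (idc f) = idc (F1 G f);
  F2_cdom : forall x, cdom (F2 G x) = F1 G (cdom x) }.

Section TwoCategories.
Variable T : TwoCatData.
Hypothesis HT : two_cat_laws T.

Lemma invertible_cell_sym (c : tcell T) f g :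
  invertible_cell c f g -> exists d, invertible_cell d g f.
Proof.
  intros [Hc [d [Hd [E1 E2]]]]. exists d. split; [assumption|]. exists c. auto.
Qed.

Lemma idc_invertible (f : tmor T) : invertible_cell (idc f) f f.
Proof.
  split; [apply (idc_between HT)|]. exists (idc f).
  rewrite (idc_vcompc_idc HT). split; [apply (idc_between HT)|]. auto.
Qed.

Lemma idm_equivalence (X : tob T) : equivalence (idm X) X X.
Proof.
  split; [apply (idm_between HT)|]. exists (idm X).
  split; [apply (idm_between HT)|].
  rewrite (idm_comp_idm HT). split; exists (idc (idm X)); apply idc_invertible.
Qed.

Lemma equivalence_sym (f : tmor T) X Y :
  equivalence f X Y -> exists g, equivalence g Y X.
Proof.
  intros [Hf [g [Hg [[c Hc] [d Hd]]]]]. exists g. split; [assumption|].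
  exists f. split; [assumption|].
  destruct (invertible_cell_sym Hc) as [c' Hc'].
  destruct (invertible_cell_sym Hd) as [d' Hd'].
  split; eauto.
Qed.
End TwoCategories.

Definition surjective_on_objects C D (G : TwoFunctorData C D) : Prop :=
  forall Y : tob D, exists X, F0 G X = Y.

Definition full_on_morphisms C D (G : TwoFunctorData C D) : Prop :=
  forall (X X' : tob C) (f : tmor D),
    mor_between f (F0 G X) (F0 G X') -> exists a, mor_between a X X' /\ F1 G a = f.

Definition fully_faithful_on_cells C D (G : TwoFunctorData C D) : Prop :=
  forall (X X' : tob C) (a a' : tmor C),
    mor_between a X X' -> mor_between a' X X' ->
    forall be : tcell D, cell_between be (F1 G a) (F1 G a') ->
      exists al : tcell C, (cell_between al a a' /\ F2 G al = be) /\
        forall al' : tcell C, cell_between al' a a' -> F2 G al' = be -> al' = al.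

Definition strict_trivial_fibration C D (G : TwoFunctorData C D) : Prop :=
  surjective_on_objects G /\ full_on_morphisms G /\ fully_faithful_on_cells G.

Section TwoFunctors.
Variables (C D : TwoCatData) (G : TwoFunctorData C D).
Hypotheses (HC : two_cat_laws C) (HD : two_cat_laws D) (HG : two_functor_laws G).

Lemma cell_over_identity (FF : fully_faithful_on_cells G) (a : tmor C) X X' (c : tcell C) :
  mor_between a X X' -> cell_between c a a -> F2 G c = idc (F1 G a) -> c = idc a.
Proof.
  intros Ha Hc Fc.
  destruct (FF _ _ _ _ Ha Ha _ (idc_between HD (F1 G a))) as [z [_ Uz]].
  rewrite (Uz c), (Uz (idc a)); auto.
  - apply (idc_between HC).
  - apply (F2_idc HG).
Qed.

Lemma invertible_cell_reflect (FF : fully_faithful_on_cells G) (a a' : tmor C) X X'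
  (be : tcell D) :
  mor_between a X X' -> mor_between a' X X' -> invertible_cell be (F1 G a) (F1 G a') ->
  exists al, invertible_cell al a a' /\ F2 G al = be.
Proof.
  intros Ha Ha' [Hbe [d [Hd [E1 E2]]]].
  destruct (FF _ _ _ _ Ha Ha' _ Hbe) as [al [[Hal Fal] _]].
  destruct (FF _ _ _ _ Ha' Ha _ Hd) as [dl [[Hdl Fdl] _]].
  exists al. split; [|assumption]. split; [assumption|]. exists dl.
  split; [assumption|]. split.
  - apply (cell_over_identity FF Ha); [apply (cell_vcomp_between HC Hal Hdl)|].
    rewrite (F2_vcompc HG Hal Hdl), Fal, Fdl. assumption.
  - apply (cell_over_identity FF Ha'); [apply (cell_vcomp_between HC Hdl Hal)|].
    rewrite (F2_vcompc HG Hdl Hal), Fal, Fdl. assumption.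
Qed.

Lemma equivalence_reflect (FF : fully_faithful_on_cells G) (Fu : full_on_morphisms G)
  (a : tmor C) X Z :
  mor_between a X Z -> equivalence (F1 G a) (F0 G X) (F0 G Z) -> equivalence a X Z.
Proof.
  intros Ha [_ [g [Hg [[c Hc] [d Hd]]]]].
  destruct (Fu _ _ _ Hg) as [g' [Hg' <-]].
  split; [assumption|]. exists g'. split; [assumption|].
  assert (Hag : mcod a = mdom g') by (destruct Ha, Hg'; congruence).
  assert (Hga : mcod g' = mdom a) by (destruct Ha, Hg'; congruence).
  rewrite <- (F1_idm HG), <- (F1_comp HG _ _ Hag) in Hc.
  rewrite <- (F1_idm HG), <- (F1_comp HG _ _ Hga) in Hd.
  split.
  - destruct (invertible_cell_reflect FF (idm_between HC X) (comp_between HC Ha Hg') Hc)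
      as [al [Hal _]]; eauto.
  - destruct (invertible_cell_reflect FF (comp_between HC Hg' Ha) (idm_between HC Z) Hd)
      as [al [Hal _]]; eauto.
Qed.

(* Strict conditions give a biequivalence and a Lack fibration: objects and
   morphisms lift on the nose, and lifts of equivalences / invertible 2-cells
   are again such by reflection. *)
Lemma strict_lack_trivial_fibration :
  strict_trivial_fibration G -> lack_trivial_fibration G.
Proof.
  intros [S [Fu FF]]. split; [split; [|split]|split].
  - intros Y. destruct (S Y) as [X <-]. exists X, (idm (F0 G X)).
    apply (idm_equivalence HD).
  - intros X X' f Hf. destruct (Fu _ _ _ Hf) as [a [Ha <-]]. exists a.
    split; [assumption|]. exists (idc (F1 G a)). apply (idc_invertible HD).
  - exact FF.
  - intros Y Z b Hb. destruct (S Y) as [X <-].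
    destruct (Fu _ _ _ (proj1 Hb)) as [a [Ha <-]].
    exists X, a. split; [|reflexivity]. apply (equivalence_reflect FF Fu Ha Hb).
  - intros b c be Hbe.
    destruct (cell_parallel HD (proj1 Hbe)) as [E1 E2].
    assert (Hb : mor_between b (F0 G (mdom c)) (F0 G (mcod c))).
    { split; [rewrite E1; apply (F1_mdom HG) | rewrite E2; apply (F1_mcod HG)]. }
    destruct (Fu _ _ _ Hb) as [a [Ha <-]].
    assert (Hc : mor_between c (mdom c) (mcod c)) by (split; reflexivity).
    destruct (invertible_cell_reflect FF Ha Hc Hbe) as [al Hal]. eauto.
Qed.

(* Conversely, strict surjectivity on objects comes from lifting a reversed
   essential-surjectivity equivalence, strict fullness from lifting the
   inverse of the comparison 2-cell given by essential fullness. *)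
Lemma lack_trivial_fibration_strict :
  lack_trivial_fibration G -> strict_trivial_fibration G.
Proof.
  intros [[B1 [B2 B3]] [LF1 LF2]]. split; [|split; [|exact B3]].
  - intros Y. destruct (B1 Y) as [X [e He]].
    destruct (equivalence_sym He) as [g Hg].
    destruct (LF1 _ _ _ Hg) as [X' [a [[[Ha _] _] Ea]]].
    exists X'. destruct Hg as [[Hg _] _].
    rewrite <- Ha, <- (F1_mdom HG), Ea. assumption.
  - intros X X' f Hf. destruct (B2 _ _ _ Hf) as [a [Ha [c Hc]]].
    destruct (invertible_cell_sym Hc) as [d Hd].
    destruct (LF2 _ _ _ Hd) as [a' [al [[Hal _] Fal]]].
    exists a'. destruct (cell_parallel HC Hal) as [E1 E2].
    split.
    + destruct Ha. split; congruence.
    + destruct Hal as [_ [<- _]]. rewrite <- (F2_cdom HG), Fal.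
      destruct Hd as [[_ [Dd _]] _]. exact Dd.
Qed.

Lemma lack_trivial_fibration_iff :
  lack_trivial_fibration G <-> strict_trivial_fibration G.
Proof.
  split; [apply lack_trivial_fibration_strict | apply strict_lack_trivial_fibration].
Qed.
End TwoFunctors.

Section DoubleCategories.
Variable A : DoubleCat.

Definition framed (s : sq A) (u u' : ver A) (a c : hor A) : Prop :=
  sq_left s = u /\ sq_right s = u' /\ sq_top s = a /\ sq_bot s = c.

Definition globular (s : sq A) (a b : hor A) : Prop :=
  framed s (vid (hdom a)) (vid (hcod a)) a b.

Lemma framed_corners (s : sq A) u u' a c :
  framed s u u' a c ->
  hdom a = vdom u /\ hcod a = vdom u' /\ hdom c = vcod u /\ hcod c = vcod u'.
Proof.
  intros [<- [<- [<- <-]]].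
  repeat split; [apply sq_frame_tl | apply sq_frame_tr | apply sq_frame_bl | apply sq_frame_br].
Qed.

Lemma globular_ends (s : sq A) a b : globular s a b -> hdom b = hdom a /\ hcod b = hcod a.
Proof.
  intros Hs. destruct (framed_corners Hs) as [_ [_ [E1 E2]]].
  rewrite vcod_vid in E1, E2. auto.
Qed.

Lemma sq_vid_globular (a : hor A) : globular (sq_vid a) a a.
Proof.
  unfold globular, framed.
  rewrite sq_vid_left, sq_vid_right, sq_vid_top, sq_vid_bot. auto.
Qed.

Lemma framed_vcomp (s t : sq A) u u' v v' a b c :
  framed s u u' a b -> framed t v v' b c ->
  framed (sq_vcomp s t) (vcomp u v) (vcomp u' v') a c.
Proof.
  intros [Ls [Rs [Ts Bs]]] [Lt [Rt [Tt Bt]]].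
  assert (C : sq_bot s = sq_top t) by congruence.
  unfold framed.
  rewrite (sq_vcomp_left C), (sq_vcomp_right C), (sq_vcomp_top C), (sq_vcomp_bot C).
  subst. auto.
Qed.

Lemma framed_whisker_top (s0 al : sq A) u u' a b c :
  globular s0 a b -> framed al u u' b c -> framed (sq_vcomp s0 al) u u' a c.
Proof.
  intros Hs Hal. pose proof (framed_vcomp Hs Hal) as Hc.
  destruct (globular_ends Hs) as [E1 E2].
  destruct (framed_corners Hal) as [K1 [K2 _]].
  rewrite <- E1, <- E2, K1, K2, !vcomp_id_l in Hc. exact Hc.
Qed.

Lemma framed_whisker_bot (al s1 : sq A) u u' a b c :
  framed al u u' a b -> globular s1 b c -> framed (sq_vcomp al s1) u u' a c.
Proof.
  intros Hal Hs. pose proof (framed_vcomp Hal Hs) as Hc.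
  destruct (framed_corners Hal) as [_ [_ [K1 K2]]].
  rewrite K1, K2, !vcomp_id_r in Hc. exact Hc.
Qed.

Lemma globular_vcomp (s t : sq A) a b c :
  globular s a b -> globular t b c -> globular (sq_vcomp s t) a c.
Proof. apply framed_whisker_bot. Qed.

Lemma Hcell_globular (s : sq A) (a b : hor A) :
  @cell_between (Hcat A) s a b <-> globular s a b.
Proof.
  unfold cell_between, globular, framed; simpl. split.
  - intros [[L R] [<- <-]]. auto.
  - intros [L [R [<- <-]]]. auto.
Qed.

Lemma vcell_valid_iff (x : VCell A) :
  vcell_valid x <->
  sq_left (vc_src x) = sq_left (vc_tgt x) /\ sq_right (vc_src x) = sq_right (vc_tgt x) /\
  globular (vc_s0 x) (sq_top (vc_src x)) (sq_top (vc_tgt x)) /\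
  globular (vc_s1 x) (sq_bot (vc_src x)) (sq_bot (vc_tgt x)) /\
  sq_vcomp (vc_s0 x) (vc_tgt x) = sq_vcomp (vc_src x) (vc_s1 x).
Proof. unfold vcell_valid, globular, framed. tauto. Qed.

(* Vertical composition of 2-cells of V A: pasting of the defining equations. *)
Lemma vcell_paste (al be ga s0 s1 t0 t1 : sq A) :
  sq_bot s0 = sq_top t0 -> sq_top t0 = sq_top be -> sq_bot t0 = sq_top ga ->
  sq_bot al = sq_top s1 -> sq_bot s1 = sq_top t1 -> sq_bot be = sq_top t1 ->
  sq_vcomp s0 be = sq_vcomp al s1 -> sq_vcomp t0 ga = sq_vcomp be t1 ->
  sq_vcomp (sq_vcomp s0 t0) ga = sq_vcomp al (sq_vcomp s1 t1).
Proof.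
  intros C1 C2 C3 C4 C5 C6 E1 E2.
  assert (C7 : sq_bot s0 = sq_top be) by congruence.
  rewrite <- (sq_vcomp_assoc C1 C3), E2, (sq_vcomp_assoc C7 C6), E1,
    (sq_vcomp_assoc C4 C5).
  reflexivity.
Qed.

Lemma H_laws : two_cat_laws (Hcat A).
Proof.
  constructor.
  - intros x y f g h Hx Hy. apply Hcell_globular in Hx, Hy.
    apply Hcell_globular. exact (globular_vcomp Hx Hy).
  - intros f. apply Hcell_globular, sq_vid_globular.
  - intros f. simpl. pose proof (sq_vcomp_id_l _ (sq_vid f)) as E.
    rewrite sq_vid_top in E. exact E.
  - intros c f g Hc. apply Hcell_globular, globular_ends in Hc. simpl. intuition.
  - intros f g X Y Z [H1 H2] [H3 H4]. unfold mor_between; simpl in *. split.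
    + rewrite hdom_hcomp; congruence.
    + rewrite hcod_hcomp; congruence.
  - intros X. split; [apply hdom_hid | apply hcod_hid].
  - intros X. simpl. pose proof (hcomp_id_l _ (hid X)) as E. rewrite hdom_hid in E. exact E.
Qed.

Lemma V_laws : two_cat_laws (Vcat A).
Proof.
  constructor.
  - intros [f g a0 a1] [g' h b0 b1] f1 g1 h1 [Vx [Ef Eg]] [Vy [Eg' Eh]]; simpl in *.
    subst f1 g1 g' h1.
    apply vcell_valid_iff in Vx, Vy; simpl in *.
    destruct Vx as [X1 [X2 [X3 [X4 X5]]]], Vy as [Y1 [Y2 [Y3 [Y4 Y5]]]].
    split; [|split; reflexivity].
    apply vcell_valid_iff; simpl.
    split; [congruence|]. split; [congruence|].
    split; [apply (globular_vcomp X3 Y3)|]. split; [apply (globular_vcomp X4 Y4)|].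
    destruct X3 as [_ [_ [_ P1]]], Y3 as [_ [_ [P2 P3]]],
      X4 as [_ [_ [P4 P5]]], Y4 as [_ [_ [P6 _]]].
    apply vcell_paste with g; congruence.
  - intros f. split; [|split; reflexivity]. apply vcell_valid_iff; simpl.
    split; [reflexivity|]. split; [reflexivity|].
    split; [apply sq_vid_globular|]. split; [apply sq_vid_globular|].
    rewrite sq_vcomp_id_l, sq_vcomp_id_r. reflexivity.
  - intros f. simpl. f_equal.
    + pose proof (sq_vcomp_id_l _ (sq_vid (sq_top f))) as E. rewrite sq_vid_top in E. exact E.
    + pose proof (sq_vcomp_id_l _ (sq_vid (sq_bot f))) as E. rewrite sq_vid_top in E. exact E.
  - intros x f g [Vx [<- <-]]. apply vcell_valid_iff in Vx. simpl. intuition.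
  - intros f g X Y Z [H1 H2] [H3 H4]. unfold mor_between; simpl in *.
    assert (C : sq_right f = sq_left g) by congruence.
    split; [rewrite (sq_hcomp_left C) | rewrite (sq_hcomp_right C)]; assumption.
  - intros X. split; [apply sq_hid_left | apply sq_hid_right].
  - intros X. simpl. pose proof (sq_hcomp_id_l _ (sq_hid X)) as E.
    rewrite sq_hid_left in E. exact E.
Qed.
End DoubleCategories.
Arguments framed {A}. Arguments globular {A}.

Section DoubleFunctors.
Variables (A B : DoubleCat) (F : DoubleFunctor A B).

Lemma HF_laws : two_functor_laws (HF F).
Proof.
  constructor; simpl.
  - apply Fh_hdom.
  - apply Fh_hcod.
  - intros f g C. apply (Fh_hcomp F f g C).
  - apply Fh_hid.
  - intros x y f g h [_ [_ Bx]] [_ [Ty _]]. apply (Fs_sq_vcomp F). simpl in *. congruence.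
  - apply Fs_sq_vid.
  - apply Fs_top.
Qed.

Lemma VF_laws : two_functor_laws (VF F).
Proof.
  constructor; simpl.
  - apply Fs_left.
  - apply Fs_right.
  - intros f g C. apply (Fs_sq_hcomp F f g C).
  - apply Fs_sq_hid.
  - intros [f g a0 a1] [g' h b0 b1] f1 g1 h1 [Vx [<- <-]] [Vy [E <-]]; simpl in *. subst g'.
    apply vcell_valid_iff in Vx, Vy; simpl in *.
    destruct Vx as [_ [_ [[_ [_ [_ X0]]] [[_ [_ [_ X1]]] _]]]].
    destruct Vy as [_ [_ [[_ [_ [Y0 _]]] [[_ [_ [Y1 _]]] _]]]].
    rewrite (Fs_sq_vcomp F (eq_trans X0 (eq_sym Y0))),
      (Fs_sq_vcomp F (eq_trans X1 (eq_sym Y1))).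
    reflexivity.
  - intros f. rewrite !Fs_sq_vid, Fs_top, Fs_bot. reflexivity.
  - reflexivity.
Qed.

Lemma framed_map (al : sq A) u u' a c :
  framed al u u' a c -> framed (Fs F al) (Fv F u) (Fv F u') (Fh F a) (Fh F c).
Proof.
  intros [<- [<- [<- <-]]]. unfold framed.
  rewrite Fs_left, Fs_right, Fs_top, Fs_bot. auto.
Qed.

Lemma globular_image_frame (t : sq B) (a c : hor A) :
  globular t (Fh F a) (Fh F c) ->
  framed t (Fv F (vid (hdom a))) (Fv F (vid (hcod a))) (Fh F a) (Fh F c).
Proof.
  intros Ht. unfold globular in Ht. rewrite Fh_hdom, Fh_hcod in Ht.
  rewrite !Fv_vid. exact Ht.
Qed.
End DoubleFunctors.

Section TrivialFibrationToStrict.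
Variables (A B : DoubleCat) (F : DoubleFunctor A B).
Hypothesis dtf : double_trivial_fibration F.

Lemma dtf_lift_framed (u u' : ver A) (a c : hor A) (be : sq B) :
  hdom a = vdom u -> hcod a = vdom u' -> hdom c = vcod u -> hcod c = vcod u' ->
  framed be (Fv F u) (Fv F u') (Fh F a) (Fh F c) ->
  exists al, framed al u u' a c /\ Fs F al = be.
Proof.
  intros E1 E2 E3 E4 [L [R [T Bo]]]. destruct dtf as [_ [_ [_ D4]]].
  destruct (D4 u u' a c be E1 E2 E3 E4 L R T Bo) as [al [[A1 [A2 [A3 [A4 A5]]]] _]].
  exists al. repeat split; assumption.
Qed.

Lemma dtf_faithful_framed (al al' : sq A) u u' a c :
  framed al u u' a c -> framed al' u u' a c -> Fs F al = Fs F al' -> al = al'.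
Proof.
  intros Hal Hal' E.
  destruct (framed_corners Hal) as [E1 [E2 [E3 E4]]].
  destruct (framed_map F Hal) as [L [R [T Bo]]].
  destruct dtf as [_ [_ [_ D4]]].
  destruct (D4 u u' a c (Fs F al) E1 E2 E3 E4 L R T Bo) as [z [_ Uz]].
  destruct Hal as [P1 [P2 [P3 P4]]], Hal' as [Q1 [Q2 [Q3 Q4]]].
  rewrite (Uz al), (Uz al'); auto.
Qed.

(* Squares with prescribed vertical boundaries lift, the horizontal ones
   being lifted first by (dt2). *)
Lemma dtf_lift_square (u u' : ver A) (be : sq B) :
  sq_left be = Fv F u -> sq_right be = Fv F u' ->
  exists al, sq_left al = u /\ sq_right al = u' /\ Fs F al = be.
Proof.
  intros L R. destruct dtf as [_ [D2 _]].
  destruct (D2 (vdom u) (vdom u') (sq_top be)) as [a [Ea1 [Ea2 Ea]]].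
  { rewrite sq_frame_tl, L, Fv_vdom. reflexivity. }
  { rewrite sq_frame_tr, R, Fv_vdom. reflexivity. }
  destruct (D2 (vcod u) (vcod u') (sq_bot be)) as [c [Ec1 [Ec2 Ec]]].
  { rewrite sq_frame_bl, L, Fv_vcod. reflexivity. }
  { rewrite sq_frame_br, R, Fv_vcod. reflexivity. }
  destruct (@dtf_lift_framed u u' a c be) as [al [[A1 [A2 _]] Fal]];
    try assumption.
  - repeat split; congruence.
  - exists al. auto.
Qed.

Lemma dtf_lift_globular (a a' : hor A) (t : sq B) :
  hdom a' = hdom a -> hcod a' = hcod a -> globular t (Fh F a) (Fh F a') ->
  exists s, globular s a a' /\ Fs F s = t.
Proof.
  intros E1 E2 Ht. apply dtf_lift_framed.
  - symmetry. apply vdom_vid.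
  - symmetry. apply vdom_vid.
  - rewrite vcod_vid. exact E1.
  - rewrite vcod_vid. exact E2.
  - apply globular_image_frame. exact Ht.
Qed.

Lemma dtf_H_strict : strict_trivial_fibration (HF F).
Proof.
  destruct dtf as [D1 [D2 _]]. split; [exact D1|split].
  - intros X X' f [H1 H2]. simpl in *.
    destruct (D2 _ _ _ H1 H2) as [a [Ha1 [Ha2 Ha3]]].
    exists a. split; [split|]; assumption.
  - intros X X' a a' [Ha1 Ha2] [Ha1' Ha2'] be Hbe. simpl in *.
    apply Hcell_globular in Hbe.
    destruct (@dtf_lift_globular a a' be) as [s [Hs Fs]]; try congruence; try exact Hbe.
    exists s. split; [split; [apply Hcell_globular|]; assumption|].
    intros s' Hs' Fs'. apply Hcell_globular in Hs'.
    apply (dtf_faithful_framed Hs' Hs). simpl in Fs'. congruence.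
Qed.

(* (dt3) and (dt4) make V F strict; a 2-cell of V B is lifted componentwise,
   and the lifted components satisfy the pasting equation by faithfulness. *)
Lemma dtf_V_strict : strict_trivial_fibration (VF F).
Proof.
  destruct dtf as [_ [_ [D3 _]]]. split; [exact D3|split].
  - intros u u' be [L R]. simpl in *. destruct (@dtf_lift_square u u' be L R) as [al [L' [R' E]]].
    exists al. split; [split|]; assumption.
  - intros u u' al al' [Ha1 Ha2] [Ha1' Ha2'] [p q t0 t1] [Vx [Ep Eq]].
    simpl in *. subst p q.
    apply vcell_valid_iff in Vx. simpl in Vx.
    destruct Vx as [_ [_ [T0 [T1 Paste]]]].
    rewrite !Fs_top in T0. rewrite !Fs_bot in T1.
    assert (Fal : framed al u u' (sq_top al) (sq_bot al)) by (repeat split; assumption).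
    assert (Fal' : framed al' u u' (sq_top al') (sq_bot al')) by (repeat split; assumption).
    destruct (framed_corners Fal) as [K1 [K2 [K3 K4]]].
    destruct (framed_corners Fal') as [K1' [K2' [K3' K4']]].
    destruct (@dtf_lift_globular (sq_top al) (sq_top al') t0) as [s0 [S0 Fs0]];
      try congruence; try exact T0.
    destruct (@dtf_lift_globular (sq_bot al) (sq_bot al') t1) as [s1 [S1 Fs1]];
      try congruence; try exact T1.
    (* the defining equation of a 2-cell of V A holds, since it holds after F *)
    assert (Key : sq_vcomp s0 al' = sq_vcomp al s1).
    { apply (dtf_faithful_framed (framed_whisker_top S0 Fal') (framed_whisker_bot Fal S1)).
      destruct S0 as [_ [_ [_ C0]]], S1 as [_ [_ [C1 _]]].
      rewrite (Fs_sq_vcomp F C0), (Fs_sq_vcomp F (eq_sym C1)), Fs0, Fs1. exact Paste. }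
    exists (mkVCell al al' s0 s1). split.
    + split; [split|]; simpl.
      * apply vcell_valid_iff. simpl.
        split; [congruence|]. split; [congruence|]. auto.
      * split; reflexivity.
      * rewrite Fs0, Fs1. reflexivity.
    + intros [p q r0 r1] [Vr [Ep Eq]] Fe. simpl in *. subst p q.
      apply vcell_valid_iff in Vr. simpl in Vr.
      destruct Vr as [_ [_ [R0 [R1 _]]]].
      injection Fe as Fr0 Fr1.
      f_equal.
      * apply (dtf_faithful_framed R0 S0). congruence.
      * apply (dtf_faithful_framed R1 S1). congruence.
Qed.
End TrivialFibrationToStrict.

Section StrictToTrivialFibration.
Variables (A B : DoubleCat) (F : DoubleFunctor A B).
Hypotheses (SH : strict_trivial_fibration (HF F)) (SV : strict_trivial_fibration (VF F)).

Lemma globular_over_identity (s : sq A) (a : hor A) :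
  globular s a a -> Fs F s = sq_vid (Fh F a) -> s = sq_vid a.
Proof.
  intros Hs Fs.
  apply (cell_over_identity (H_laws A) (H_laws B) (HF_laws F) (proj2 (proj2 SH))
           (X := hdom a) (X' := hcod a)); [split; reflexivity | |].
  - apply Hcell_globular. exact Hs.
  - exact Fs.
Qed.

(* Uniqueness in (dt4): lift the identity 2-cell of V B on F al to a 2-cell
   al => al' of V A; its globular components lie over identities, hence are
   identities, and its defining equation then reads al' = al. *)
Lemma framed_squares_faithful (al al' : sq A) u u' a c :
  framed al u u' a c -> framed al' u u' a c -> Fs F al = Fs F al' -> al = al'.
Proof.
  intros [L [R [T Bo]]] [L' [R' [T' Bo']]] E.
  assert (Hid : @cell_between (Vcat B) (@idc (Vcat B) (Fs F al)) (F1 (VF F) al) (F1 (VF F) al')).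
  { simpl. rewrite <- E. apply (idc_between (V_laws B)). }
  assert (M : @mor_between (Vcat A) al u u') by (split; assumption).
  assert (M' : @mor_between (Vcat A) al' u u') by (split; assumption).
  destruct (proj2 (proj2 SV) u u' al al' M M' _ Hid) as [[p q s0 s1] [[[Vx [Ep Eq]] Fx] _]].
  simpl in *. subst p q. injection Fx as _ Fs0 Fs1.
  apply vcell_valid_iff in Vx. simpl in Vx. destruct Vx as [_ [_ [S0 [S1 Paste]]]].
  rewrite T, T' in S0. rewrite Bo, Bo' in S1.
  rewrite Fs_top, T in Fs0. rewrite Fs_bot, Bo in Fs1.
  rewrite (globular_over_identity S0 Fs0), (globular_over_identity S1 Fs1) in Paste.
  rewrite <- T', sq_vcomp_id_l, <- Bo, sq_vcomp_id_r in Paste.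
  symmetry. exact Paste.
Qed.

(* Existence in (dt4): lift be in V F to a square al1 with the right vertical
   boundaries, then correct its horizontal boundaries by pasting the globular
   squares lifting the identities F a => F (top al1) and F (bot al1) => F c. *)
Lemma framed_squares_lift (u u' : ver A) (a c : hor A) (be : sq B) :
  hdom a = vdom u -> hcod a = vdom u' -> hdom c = vcod u -> hcod c = vcod u' ->
  framed be (Fv F u) (Fv F u') (Fh F a) (Fh F c) ->
  exists al, framed al u u' a c /\ Fs F al = be.
Proof.
  intros E1 E2 E3 E4 [L [R [T Bo]]].
  destruct SH as [_ [_ FFH]].
  destruct (proj1 (proj2 SV) u u' be (conj L R)) as [al1 [[L1 R1] Fal1]].
  simpl in *.
  assert (Fr1 : framed al1 u u' (sq_top al1) (sq_bot al1)) by (repeat split; assumption).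
  destruct (framed_corners Fr1) as [K1 [K2 [K3 K4]]].
  assert (Ma : @mor_between (Hcat A) a (hdom a) (hcod a)) by (split; reflexivity).
  assert (Mc : @mor_between (Hcat A) c (hdom c) (hcod c)) by (split; reflexivity).
  assert (Ma1 : @mor_between (Hcat A) (sq_top al1) (hdom a) (hcod a))
    by (split; simpl; congruence).
  assert (Mc1 : @mor_between (Hcat A) (sq_bot al1) (hdom c) (hcod c))
    by (split; simpl; congruence).
  assert (Ca : @cell_between (Hcat B) (sq_vid (Fh F a)) (F1 (HF F) a) (F1 (HF F) (sq_top al1))).
  { simpl. rewrite <- Fs_top, Fal1, T. apply (idc_between (H_laws B)). }
  assert (Cc : @cell_between (Hcat B) (sq_vid (Fh F c)) (F1 (HF F) (sq_bot al1)) (F1 (HF F) c)).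
  { simpl. rewrite <- Fs_bot, Fal1, Bo. apply (idc_between (H_laws B)). }
  destruct (FFH _ _ _ _ Ma Ma1 _ Ca) as [s0 [[S0 Fs0] _]].
  destruct (FFH _ _ _ _ Mc1 Mc _ Cc) as [s1 [[S1 Fs1] _]].
  apply Hcell_globular in S0, S1. simpl in Fs0, Fs1.
  exists (sq_vcomp s0 (sq_vcomp al1 s1)). split.
  - exact (framed_whisker_top S0 (framed_whisker_bot Fr1 S1)).
  - destruct S0 as [_ [_ [_ C0]]], S1 as [_ [_ [C1 _]]].
    assert (C0' : sq_bot s0 = sq_top (sq_vcomp al1 s1))
      by (rewrite (sq_vcomp_top (eq_sym C1)); exact C0).
    rewrite (Fs_sq_vcomp F C0'), (Fs_sq_vcomp F (eq_sym C1)), Fs0, Fs1, Fal1, <- T, <- Bo.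
    rewrite sq_vcomp_id_r, sq_vcomp_id_l. reflexivity.
Qed.

Lemma strict_double_trivial_fibration : double_trivial_fibration F.
Proof.
  destruct SH as [SurjH [FullH _]]. destruct SV as [SurjV _].
  split; [exact SurjH|split; [|split; [exact SurjV|]]].
  - intros X Z b H1 H2. destruct (FullH X Z b (conj H1 H2)) as [a [[Ha1 Ha2] Ha3]].
    exists a. auto.
  - intros u u' a c be E1 E2 E3 E4 L R T Bo.
    destruct (@framed_squares_lift u u' a c be E1 E2 E3 E4 (conj L (conj R (conj T Bo))))
      as [al [Hal Fal]].
    exists al. split; [destruct Hal as [P1 [P2 [P3 P4]]]; auto|].
    intros al' Q1 Q2 Q3 Q4 Q5.
    apply (framed_squares_faithful (conj Q1 (conj Q2 (conj Q3 Q4))) Hal). congruence.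
Qed.
End StrictToTrivialFibration.

Theorem corollary3p14 (A B : DoubleCat) (F : DoubleFunctor A B) :
  double_trivial_fibration F <->
  (lack_trivial_fibration (HF F) /\ lack_trivial_fibration (VF F)).
Proof.
  pose proof (lack_trivial_fibration_iff (H_laws A) (H_laws B) (HF_laws F)) as IH.
  pose proof (lack_trivial_fibration_iff (V_laws A) (V_laws B) (VF_laws F)) as IV.
  split.
  - intros D. split; [apply IH, dtf_H_strict | apply IV, dtf_V_strict]; exact D.
  - intros [LH LV]. apply strict_double_trivial_fibration; [apply IH | apply IV]; assumption.
Qed.
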